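(* Let $P$ be a probability measure on $(\Omega,\mathcal A)$ and $\delta\in(\tfrac12,1)$. Then the C-measure generated by the C-class $\bar T(P,\delta)=\{A\in\bar{\mathcal A}:\bar P(A)\ge\delta\}$ equals $\bar P$, i.e. $\bar M_{\bar T(P,\delta)}(A)=\bar P(A)$ for all $A\in\bar{\mathcal A}$.
   Context: Let $(\Omega,\mathcal A)$ be a measurable space. For $n\ge1$, $\mathcal A^n$ is the product $\sigma$-algebra on $\Omega^n$; the extended event space is $\bar{\mathcal A}=\bigcup_{n\ge1}\mathcal A^n$, events tagged by their level $n$ (written $A^{(n)}$). For $k\ge1$, $(\Omega^n)^k$ is identified with $\Omega^{nk}$ and $(\mathcal A^n)^k$ with $\mathcal A^{nk}$. For a probability measure $P$ on $\mathcal A$, $P^n$ is its $n$-fold product, and $\bar P(A^{(n)})=P^n(A^{(n)})$. For $A^{(n)}\in\mathcal A^n$, an interval $I\subseteq[0,1]$ and $k\in\mathbb N^+$, $S(A^{(n)},I,k)=\{(\omega_1,\dots,\omega_k)\in(\Omega^n)^k:\frac1k\sum_{i=1}^k\chi_{A^{(n)}}(\omega_i)\in I\}$. A class $\bar{\mathbf C}\subseteq\bar{\mathcal A}$ is a C-class if each component $\mathcal C^{(n)}=\bar{\mathbf C}\cap\mathcal A^n$ contains $\Omega^n$, is closed under supersets within $\mathcal A^n$, and contains no two disjoint events. ''$S(A,I,k)\in\bar{\mathbf C}$ definitively'' means there is $k_0$ with $S(A,I,k)\in\bar{\mathbf C}$ for all $k>k_0$. The C-measure of a C-class is $\bar M_{\bar{\mathbf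 C}}(A)=\sup\{\sigma\in[0,1]: S(A,[\sigma,1],k)\in\bar{\mathbf C}\text{ definitively}\}$. *)

From HB Require Import structures.
From mathcomp Require Import all_boot all_order all_algebra.
From mathcomp Require Import all_classical all_reals all_analysis.
Set Implicit Arguments.
Unset Strict Implicit.
Unset Printing Implicit Defensive.
Import Order.TTheory GRing.Theory Num.Theory.
Local Open Scope classical_set_scope.
Local Open Scope ring_scope.

(* Omega^n is represented as n.-tuple T, with the library's product
   sigma-algebra (generated by the coordinate maps).  An event of the
   extended event space at level n is a measurable A : set (n.-tuple T). *)

Lemma block_index_lt (n k : nat) (i : 'I_k) (j : 'I_n) : (i * n + j < n * k)%N.
Proof.
case: i j => i /= Hi [j /= Hj].
apply: (@leq_trans ((i.+1) * n)%N); first by rewrite mulSn addnC ltn_add2r.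
by rewrite mulnC leq_mul2l Hi orbT.
Qed.

(* Identification (Omega^n)^k = Omega^(n k): the i-th block (i < k) of a
   point of Omega^(n k) is the n-tuple of coordinates i*n, ..., i*n+n-1. *)
Definition block {T : Type} (n k : nat) (t : (n * k).-tuple T) (i : 'I_k)
  : n.-tuple T :=
  [tuple tnth t (Ordinal (block_index_lt i j)) | j < n].

Definition Sfreq {R : realType} {T : Type} (n : nat) (A : set (n.-tuple T))
  (I : set R) (k : nat) : set ((n * k).-tuple T) :=
  [set t | I (k%:R^-1 * \sum_(i < k) \1_A (block t i))].

Definition eclass (T : Type) := forall n : nat, set (set (n.-tuple T)).

Definition definitively_in {R : realType} {T : Type} (C : eclass T) (n : nat)
  (A : set (n.-tuple T)) (sigma : R) : Prop :=
  exists k0 : nat, forall k : nat, (k0 < k)%N ->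
    C (n * k)%N (@Sfreq R T n A `[sigma, 1]%classic k).

Definition C_measure {R : realType} {T : Type} (C : eclass T) (n : nat)
  (A : set (n.-tuple T)) : R :=
  sup [set sigma : R | 0 <= sigma <= 1 /\ definitively_in C A sigma].

(* P^n is the n-fold product of P: a probability on Omega^n (with the product
   sigma-algebra) that gives measurable rectangles the product of the
   marginal probabilities (this determines it uniquely). *)
Definition is_product_family {R : realType} {d : measure_display}
  {T : measurableType d} (P : probability T R)
  (Pn : forall n : nat, probability (n.-tuple T) R) : Prop :=
  forall (n : nat) (B : 'I_n -> set T), (forall i, measurable (B i)) ->
    Pn n [set t | forall i, B i (tnth t i)] = (\prod_(i < n) P (B i))%E.

Definition Tclass {R : realType} {d : measure_display} {T : measurableType d}
  (Pn : forall n : nat, probability (n.-tuple T) R) (delta : R) : eclass T :=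
  fun n A => measurable A /\ (delta%:E <= Pn n A)%E.

(* Cut a point of Omega^(n k) into k blocks of length n.  Under P^(n k) the
   blocks are independent with law P^n (both facts need only be checked on
   measurable rectangles), so the number of blocks lying in A has mean k p and
   variance k (p - p^2), where p = P^n(A).  Chebyshev's inequality then gives
   P^(n k)(|freq - p| >= e) <= 1 / (k e^2) for the block frequency freq.  Hence
   S(A, [s, 1], k) has probability tending to 1 when s < p and to 0 when s > p:
   since 0 < delta < 1, it lies definitively in T(P, delta) for every s < p and
   for no s > p, and the supremum of these s is p. *)

From mathcomp Require Import all_boot all_order all_algebra.
From mathcomp Require Import all_classical all_reals all_analysis.
From mathcomp Require Import measurable_realfun ring lra.
Import Order.TTheory GRing.Theory Num.Theory.
Local Open Scope classical_set_scope.
Local Open Scope ring_scope.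

Definition rect {T : Type} {n : nat} (B : 'I_n -> set T) : set (n.-tuple T) :=
  [set t | forall i, B i (tnth t i)].

Lemma rectI {T : Type} {n : nat} (B B' : 'I_n -> set T) :
  rect B `&` rect B' = rect (fun i => B i `&` B' i).
Proof.
apply/seteqP; split=> t /=; first by move=> [HB HB'] i; split.
by move=> HBB'; split=> i; case: (HBB' i).
Qed.

Section measurable_rectangles.
Context {d : measure_display} {T : measurableType d} (n : nat).

Definition measurable_rects : set (set (n.-tuple T)) :=
  [set rect B | B in [set B : 'I_n -> set T | forall i, measurable (B i)]].

Lemma rect_measurable (B : 'I_n -> set T) : (forall i, measurable (B i)) ->
  measurable (rect B).
Proof.
move=> mB.
have -> : rect B = \bigcap_(i in [set: 'I_n]) ((@tnth n T)^~ i @^-1` B i).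
  by apply/seteqP; split=> t Ht i; [move=> _|]; exact: Ht.
apply: fin_bigcap_measurable; first exact: finite_finset.
by move=> i _; rewrite -[X in measurable X]setTI; exact: measurable_tnth.
Qed.

Lemma measurable_rects_gen :
  (measurable : set (set (n.-tuple T))) = <<s measurable_rects >>.
Proof.
apply/seteqP; split; last first.
  apply: smallest_sub; first exact: sigma_algebra_measurable.
  by move=> _ [B mB <-]; exact: rect_measurable.
move=> X mX; apply: (smallest_sub _ _ mX); first exact: smallest_sigma_algebra.
move=> Y HY.
have [i [Z mZ <-]] : exists i : 'I_n, preimage_set_system [set: n.-tuple T]
    ((@tnth n T)^~ i) measurable Y.
  move: HY; apply: (big_ind (fun S : set (set (n.-tuple T)) => S Y -> _)) => //.
    by move=> S1 S2 H1 H2 [/H1|/H2].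
  by move=> i _ HY; exists i.
apply: sub_sigma_algebra; exists (fun j => if j == i then Z else setT).
  by move=> j /=; case: eqP.
apply/seteqP; split=> t /=; last by move=> [_ Ht] j; case: eqP => // ->.
by move=> Ht; split=> //; have := Ht i; rewrite eqxx.
Qed.

Lemma measure_eq_on_rects {R : realType}
  (m1 m2 : {measure set (n.-tuple T) -> \bar R}) :
  (m1 setT < +oo)%E ->
  (forall B, (forall i, measurable (B i)) -> m1 (rect B) = m2 (rect B)) ->
  forall E, measurable E -> m1 E = m2 E.
Proof.
move=> m1oo m12.
apply: (measure_unique measurable_rects (fun=> setT)).
- exact: measurable_rects_gen.
- move=> _ _ [B mB <-] [B' mB' <-]; rewrite rectI.
  by exists (fun i => B i `&` B' i) => // i; exact: measurableI.
- by move=> _; exists (fun=> setT) => //; apply/seteqP; split.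
- by rewrite bigcup_const.
- by move=> _ [B mB <-]; exact: m12.
- by move=> _.
Qed.

End measurable_rectangles.

Lemma preimage_setI_eq_on_rects {R : realType} {d d' : measure_display}
  {T : measurableType d} {X : measurableType d'} (n : nat)
  (mu : probability X R) (Q : probability (n.-tuple T) R)
  (C : set X) (f : X -> n.-tuple T) :
  measurable C -> measurable_fun setT f ->
  (forall B, (forall i, measurable (B i)) ->
     mu (f @^-1` rect B `&` C) = (mu C * Q (rect B))%E) ->
  forall E, measurable E -> mu (f @^-1` E `&` C) = (mu C * Q E)%E.
Proof.
move=> mC mf muQ E mE.
have muC : mu C = (fine (mu C))%:E by rewrite fineK // fin_num_measure.
have muC0 : 0 <= fine (mu C) by rewrite fine_ge0.
rewrite [in RHS]muC.
apply: (@measure_eq_on_rects _ _ _ _ (pushforward (mrestr mu mC) f)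
  (mscale (NngNum muC0) Q)) => // [|B mB].
  change (mu (f @^-1` setT `&` C) < +oo)%E.
  by rewrite preimage_setT setTI (le_lt_trans (probability_le1 _ _)) ?ltry.
change (mu (f @^-1` rect B `&` C) = (fine (mu C))%:E * Q (rect B))%E.
by rewrite -muC; exact: muQ.
Qed.

Lemma preimage_eq_on_rects {R : realType} {d d' : measure_display}
  {T : measurableType d} {X : measurableType d'} (n : nat)
  (mu : probability X R) (Q : probability (n.-tuple T) R) (f : X -> n.-tuple T) :
  measurable_fun setT f ->
  (forall B, (forall i, measurable (B i)) -> mu (f @^-1` rect B) = Q (rect B)) ->
  forall E, measurable E -> mu (f @^-1` E) = Q E.
Proof.
move=> mf muQ E mE.
apply: (@measure_eq_on_rects _ _ _ _ (pushforward mu f)) => //.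
change (mu (f @^-1` setT) < +oo)%E.
by rewrite preimage_setT probability_setT ltry.
Qed.

Definition lift_family {T : Type} {n m : nat} (s : 'I_n -> 'I_m)
  (B : 'I_n -> set T) (l : 'I_m) : set T :=
  if [pick j | s j == l] is Some j then B j else setT.

Section lift_family.
Context {T : Type} {n m : nat} (s : 'I_n -> 'I_m) (B : 'I_n -> set T).

Lemma lift_family_im : injective s -> forall j, lift_family s B (s j) = B j.
Proof.
move=> s_inj j; rewrite /lift_family; case: pickP => [j' /eqP /s_inj -> //|].
by move=> /(_ j); rewrite eqxx.
Qed.

Lemma lift_family_notin l : (forall j, s j != l) -> lift_family s B l = setT.
Proof.
by move=> sl; rewrite /lift_family; case: pickP => // j; rewrite (negbTE (sl j)).
Qed.

Lemma rect_lift_family (t : m.-tuple T) : injective s ->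
  rect (lift_family s B) t <-> (forall j, B j (tnth t (s j))).
Proof.
move=> s_inj; split=> Ht; first by move=> j; have := Ht (s j); rewrite lift_family_im.
by move=> l; rewrite /lift_family; case: pickP => // j /eqP <-.
Qed.

End lift_family.

Lemma lift_family_measurable {d : measure_display} {T : measurableType d}
  {n m : nat} (s : 'I_n -> 'I_m) (B : 'I_n -> set T) l :
  (forall j, measurable (B j)) -> measurable (lift_family s B l).
Proof. by move=> mB; rewrite /lift_family; case: pickP. Qed.

Section lift_family_prod.
Local Open Scope ereal_scope.
Context {R : realType} {d : measure_display} {T : measurableType d}
  (P : probability T R) {m : nat}.

Lemma prod_lift_family {n : nat} (s : 'I_n -> 'I_m) (B : 'I_n -> set T) :
  injective s ->
  \prod_(l < m) P (lift_family s B l) = \prod_(j < n) P (B j).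
Proof.
move=> s_inj.
rewrite (bigID (mem [set s j | j in [set: 'I_n]]%SET)) /=.
rewrite [X in _ * X]big1 ?mule1 => [|l]; last first.
  move=> s'l; rewrite lift_family_notin ?probability_setT // => j.
  by apply: contra s'l => /eqP <-; rewrite imset_f ?inE.
rewrite big_imset /= => [|j j' _ _]; last exact: s_inj.
by apply: eq_big => [j|j _]; rewrite ?inE // lift_family_im.
Qed.

Lemma prod_lift_familyI {n n' : nat} (s : 'I_n -> 'I_m) (s' : 'I_n' -> 'I_m)
  (B : 'I_n -> set T) (B' : 'I_n' -> set T) :
  injective s -> injective s' -> (forall j j', s j != s' j') ->
  \prod_(l < m) P (lift_family s B l `&` lift_family s' B' l) =
  \prod_(j < n) P (B j) * \prod_(j < n') P (B' j).
Proof.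
move=> s_inj s'_inj ss'.
rewrite -(prod_lift_family s B) // -(prod_lift_family s' B') // -big_split /=.
apply: eq_bigr => l _.
have [[j <-]|s'l] := pselect (exists j, s j = l).
  rewrite (lift_family_notin s' B') ?setIT ?probability_setT ?mule1 // => j'.
  by rewrite eq_sym.
rewrite (lift_family_notin s B) ?setTI ?probability_setT ?mul1e // => j.
by apply/eqP=> sjl; apply: s'l; exists j.
Qed.

End lift_family_prod.

Definition block_ord {n k : nat} (i : 'I_k) (j : 'I_n) : 'I_(n * k) :=
  Ordinal (block_index_lt i j).

Lemma tnth_block {T : Type} {n k : nat} (t : (n * k).-tuple T) i j :
  tnth (block t i) j = tnth t (block_ord i j).
Proof. exact: tnth_mktuple. Qed.

Lemma block_ord_inj {n k : nat} (i : 'I_k) : injective (@block_ord n k i).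
Proof. by move=> j j' /(congr1 val) /= /addnI /val_inj. Qed.

Lemma block_ord_neq {n k : nat} (i i' : 'I_k) j j' : (0 < n)%N -> i != i' ->
  @block_ord n k i j != block_ord i' j'.
Proof.
move=> n0; apply: contra => /eqP /(congr1 (fun l => val l %/ n)%N) /=.
by rewrite !divnMDl // !divn_small // !addn0 => /val_inj ->.
Qed.

Section blocks.
Local Open Scope ereal_scope.
Context {R : realType} {d : measure_display} {T : measurableType d}
  {P : probability T R} {Pn : forall n : nat, probability (n.-tuple T) R}
  (hPn : is_product_family P Pn) (n k : nat).

Local Notation blk i := (fun t : (n * k).-tuple T => block t i).

Lemma measurable_block (i : 'I_k) : measurable_fun setT (blk i).
Proof.
apply/measurable_fun_tnthP => j.
rewrite (_ : _ \o _ = (@tnth _ T)^~ (block_ord i j)); first exact: measurable_tnth.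
by apply/funext => t /=; rewrite tnth_block.
Qed.

Lemma measurable_preimage_block i E : measurable E -> measurable (blk i @^-1` E).
Proof. by move=> mE; rewrite -[X in measurable X]setTI; exact: measurable_block. Qed.

Lemma preimage_block_rect i (B : 'I_n -> set T) :
  blk i @^-1` rect B = rect (lift_family (block_ord (k:=k) i) B).
Proof.
apply/seteqP; split=> t /=.
  move=> Ht; apply/rect_lift_family; first exact: block_ord_inj.
  by move=> j; rewrite -tnth_block.
by move=> /rect_lift_family Ht j; rewrite tnth_block; apply: Ht; exact: block_ord_inj.
Qed.

Lemma Pn_preimage_block i E : measurable E ->
  Pn (n * k) (blk i @^-1` E) = Pn n E.
Proof.
apply: preimage_eq_on_rects; first exact: measurable_block.
move=> B mB; rewrite preimage_block_rect !hPn ?prod_lift_family //.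
  exact: block_ord_inj.
by move=> l; exact: lift_family_measurable.
Qed.

Hypothesis n_gt0 : (0 < n)%N.

Lemma Pn_preimage_blocks_rect i i' (B B' : 'I_n -> set T) : i != i' ->
  (forall j, measurable (B j)) -> (forall j, measurable (B' j)) ->
  Pn (n * k) (blk i @^-1` rect B `&` blk i' @^-1` rect B') =
  Pn n (rect B) * Pn n (rect B').
Proof.
move=> ii' mB mB'; rewrite !preimage_block_rect rectI !hPn //.
  apply: prod_lift_familyI; try exact: block_ord_inj.
  by move=> j j'; exact: block_ord_neq.
by move=> l; apply: measurableI; exact: lift_family_measurable.
Qed.

(* Extend the rectangle case to measurable sets one block at a time, each time
   by uniqueness of finite measures agreeing on rectangles. *)
Lemma Pn_preimage_blocksI i i' E E' : i != i' -> measurable E -> measurable E' ->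
  Pn (n * k) (blk i @^-1` E `&` blk i' @^-1` E') = Pn n E * Pn n E'.
Proof.
move=> ii' mE mE'.
have rectE B : (forall j, measurable (B j)) ->
    Pn (n * k) (blk i @^-1` E `&` blk i' @^-1` rect B) =
    Pn (n * k) (blk i' @^-1` rect B) * Pn n E.
  move=> mB; apply: preimage_setI_eq_on_rects => //.
  - by apply: measurable_preimage_block; exact: rect_measurable.
  - exact: measurable_block.
  move=> B' mB'; rewrite Pn_preimage_blocks_rect // Pn_preimage_block 1?muleC //.
  exact: rect_measurable.
rewrite setIC (preimage_setI_eq_on_rects n _ (Pn n) _ _
  (measurable_preimage_block i E mE) (measurable_block i') _ E' mE').
  by rewrite Pn_preimage_block.
move=> B mB.
rewrite setIC rectE // !Pn_preimage_block 1?muleC //.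
exact: rect_measurable.
Qed.

End blocks.

Section second_moment.
Context {R : realType} {d : measure_display} {X : measurableType d}
  (mu : probability X R).

Let integral_EFinD (f g : X -> R) : (forall x, 0 <= f x) -> (forall x, 0 <= g x) ->
  measurable_fun setT f -> measurable_fun setT g ->
  (\int[mu]_x (f x + g x)%:E = \int[mu]_x (f x)%:E + \int[mu]_x (g x)%:E)%E.
Proof.
move=> f0 g0 mf mg; under eq_integral do rewrite EFinD.
apply: ge0_integralD => //.
- by move=> x _; rewrite lee_fin.
- exact/measurable_EFinP.
- by move=> x _; rewrite lee_fin.
- exact/measurable_EFinP.
Qed.

Let integral_EFinZ (a : R) (f : X -> R) : 0 <= a -> (forall x, 0 <= f x) ->
  measurable_fun setT f ->
  (\int[mu]_x (a * f x)%:E = a%:E * \int[mu]_x (f x)%:E)%E.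
Proof.
move=> a0 f0 mf; under eq_integral do rewrite EFinM.
apply: ge0_integralZl => //; first exact/measurable_EFinP.
by move=> x _; rewrite lee_fin.
Qed.

(* Chebyshev's inequality, obtained by integrating
   e^2 1_W + 2 m f <= f^2 + m^2. *)
Lemma second_moment_tail (f : X -> R) (m s e : R) (W : set X) :
  measurable W -> measurable_fun setT f -> (forall x, 0 <= f x) ->
  0 <= m -> 0 <= e ->
  (\int[mu]_x (f x)%:E = m%:E)%E -> (\int[mu]_x (f x ^+ 2)%:E = s%:E)%E ->
  (forall x, W x -> e <= `|f x - m|) ->
  e ^+ 2 * fine (mu W) <= s - m ^+ 2.
Proof.
move=> mW mf f0 m0 e0 intf intf2 devW.
have le_moments x : e ^+ 2 * \1_W x + 2 * m * f x <= f x ^+ 2 + m ^+ 2.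
  suff : e ^+ 2 * \1_W x <= (f x - m) ^+ 2 by nra.
  rewrite /indic; have [/set_mem Wx|_] := boolP (x \in W).
    rewrite mulr1 -(@real_normK _ (f x - m)) ?num_real //.
    by have := devW x Wx; nra.
  by rewrite mulr0 sqr_ge0.
have int_lhs : (\int[mu]_x (e ^+ 2 * \1_W x + 2 * m * f x)%:E =
    (e ^+ 2 * fine (mu W) + 2 * m * m)%:E)%E.
  rewrite integral_EFinD => [|x|x||]; rewrite ?mulr_ge0 ?sqr_ge0 //;
    try by apply: measurable_funM.
  rewrite !integral_EFinZ ?mulr_ge0 ?sqr_ge0 // intf integral_indic // setIT.
  by rewrite -[X in (_ * X + _)%E]fineK ?fin_num_measure // -!EFinM -EFinD.
have int_rhs : (\int[mu]_x (f x ^+ 2 + m ^+ 2)%:E = (s + m ^+ 2)%:E)%E.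
  rewrite integral_EFinD => [|x|x||]; rewrite ?sqr_ge0 //; last exact: measurable_funX.
  have -> : (\int[mu]_x (m ^+ 2)%:E = (m ^+ 2)%:E * mu setT)%E.
    exact: (integral_cst mu measurableT).
  by rewrite intf2 probability_setT mule1 -EFinD.
suff : e ^+ 2 * fine (mu W) + 2 * m * m <= s + m ^+ 2 by lra.
rewrite -lee_fin -int_lhs -int_rhs; apply: ge0_le_integral => //.
- by move=> x _; rewrite lee_fin addr_ge0 ?mulr_ge0 ?sqr_ge0.
- by apply/measurable_EFinP; apply: measurable_funD; exact: measurable_funM.
- by apply/measurable_EFinP; apply: measurable_funD => //; exact: measurable_funX.
- by move=> x _; rewrite lee_fin le_moments.
Qed.

End second_moment.

Section block_frequency.
Context {R : realType} {d : measure_display} {T : measurableType d}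
  {P : probability T R} {Pn : forall n : nat, probability (n.-tuple T) R}
  (hPn : is_product_family P Pn) {n k : nat} (n_gt0 : (0 < n)%N)
  {A : set (n.-tuple T)} (mA : measurable A).

Let mu := Pn (n * k).
Let X (i : 'I_k) := (fun t : (n * k).-tuple T => block t i) @^-1` A.
Let hits (t : (n * k).-tuple T) : R := \sum_(i < k) \1_(X i) t.
Let p := fine (Pn n A).

Let mX i : measurable (X i).
Proof. exact: measurable_preimage_block. Qed.

Let mu_X i : mu (X i) = p%:E.
Proof. by rewrite (Pn_preimage_block hPn) // fineK ?fin_num_measure. Qed.

Let mu_XI i j : mu (X i `&` X j) = (if i == j then p else p * p)%:E.
Proof.
case: eqP => [<-|/eqP ij]; first by rewrite setIid mu_X.
by rewrite (Pn_preimage_blocksI hPn) // EFinM fineK ?fin_num_measure.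
Qed.

Let hits_ge0 t : 0 <= hits t.
Proof. by apply: sumr_ge0 => i _; rewrite /indic. Qed.

Lemma measurable_hits : measurable_fun setT hits.
Proof. by apply: measurable_sum => i; exact: (measurable_indic (mX i)). Qed.

Lemma integral_hits : (\int[mu]_t (hits t)%:E = (k%:R * p)%:E)%E.
Proof.
under eq_integral do rewrite /hits -sumEFin.
rewrite ge0_integral_sum // => [|i]; last first.
  exact: (measurable_EFinP _ _).2 (measurable_indic (mX i)).
rewrite (eq_bigr (fun=> p%:E)) => [|i _]; last first.
  by rewrite integral_indic ?setIT //; exact: (mu_X i).
by rewrite sumEFin sumr_const card_ord mulr_natl.
Qed.

Lemma integral_hits_sqr :
  (\int[mu]_t (hits t ^+ 2)%:E = (k%:R ^+ 2 * p ^+ 2 + k%:R * (p - p ^+ 2))%:E)%E.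
Proof.
have hits_sqrE t :
    (hits t ^+ 2)%:E = \sum_(ij : 'I_k * 'I_k) (\1_(X ij.1 `&` X ij.2) t)%:E.
  rewrite sumEFin -(pair_bigA _ (fun i j => \1_(X i `&` X j) t)) /= expr2.
  rewrite /hits mulr_suml; congr (_%:E); apply: eq_bigr => i _.
  by rewrite mulr_sumr; apply: eq_bigr => j _; rewrite indicI.
under eq_integral do rewrite hits_sqrE.
rewrite ge0_integral_sum // => [|ij]; last first.
  exact: (measurable_EFinP _ _).2 (measurable_indic (measurableI _ _ (mX _) (mX _))).
rewrite (eq_bigr (fun ij => (if ij.1 == ij.2 then p else p * p)%:E)) => [|ij _];
  last first.
  by rewrite integral_indic ?setIT //; [exact: mu_XI|exact: measurableI].
rewrite sumEFin -(pair_bigA _ (fun i j => if i == j then p else p * p)) /=.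
congr (_%:E); rewrite (eq_bigr (fun=> k%:R * p ^+ 2 + (p - p ^+ 2))) => [|i _].
  by rewrite sumr_const card_ord -mulr_natl; ring.
rewrite (bigD1 i) //= eqxx (eq_bigr (fun=> p * p)) => [|j /negbTE]; last first.
  by rewrite eq_sym => ->.
rewrite sumr_const cardC1 card_ord; case: k i => [[]//|k'] i /=.
by rewrite mulrSr -mulr_natl; ring.
Qed.

Let hits_deviation (W : set ((n * k).-tuple T)) (e : R) :
  measurable W -> 0 <= e ->
  (forall t, W t -> e * k%:R <= `|hits t - k%:R * p|) ->
  e ^+ 2 * k%:R * fine (mu W) <= 1.
Proof.
move=> mW e0 devW.
have p0 : 0 <= p by rewrite fine_ge0.
have p1 : p <= 1 by rewrite -lee_fin fineK ?fin_num_measure ?probability_le1.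
have w0 : 0 <= fine (mu W) by rewrite fine_ge0.
have := second_moment_tail mu _ _ _ _ _ mW measurable_hits hits_ge0
  (mulr_ge0 (ler0n _ _) p0) (mulr_ge0 e0 (ler0n _ _)) integral_hits integral_hits_sqr
  devW => tail.
have [k0|k_gt0] := posnP k.
  have -> : k%:R = 0 :> R by rewrite k0.
  by rewrite mulr0 mul0r ler01.
have kpp : k%:R * (p - p ^+ 2) <= k%:R by apply: ler_piMr => //; nra.
by rewrite -(@ler_pM2l _ k%:R) ?ltr0n // mulr1; nra.
Qed.

Lemma frequency_deviation_lt {W : set ((n * k).-tuple T)} {e x : R} :
  measurable W -> 0 < e -> 0 < x -> (x * e ^+ 2)^-1 < k%:R ->
  (forall t, W t -> e <= `|k%:R^-1 * hits t - p|) -> fine (mu W) < x.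
Proof.
move=> mW e0 x0 k_big devW.
have xe0 : 0 < x * e ^+ 2 by rewrite mulr_gt0 ?exprn_gt0.
have k0 : 0 < k%:R :> R by apply: lt_trans k_big; rewrite invr_gt0.
have kxe : 1 < k%:R * (x * e ^+ 2) by rewrite -ltr_pdivrMr // div1r.
have := hits_deviation W e mW (ltW e0).
have w0 : 0 <= fine (mu W) by rewrite fine_ge0.
suff devW' t : W t -> e * k%:R <= `|hits t - k%:R * p| by move/(_ devW'); nra.
move=> /devW.
have -> : k%:R^-1 * hits t - p = k%:R^-1 * (hits t - k%:R * p).
  by rewrite mulrBr mulKf // lt0r_neq0.
by rewrite normrM gtr0_norm ?invr_gt0 // ler_pdivlMl // mulrC.
Qed.

End block_frequency.

Lemma nat_gt_eventually {R : realType} (c : R) :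
  exists k0, forall k, (k0 < k)%N -> c < k%:R.
Proof.
exists (Num.truncn c) => k k_big; apply: (lt_le_trans (truncnS_gt c)).
by rewrite ler_nat.
Qed.

Lemma sup_eq_ubound_itv {R : realType} (S : set R) (p : R) :
  S 0 -> ubound S p -> (forall s, 0 <= s < p -> S s) -> sup S = p.
Proof.
move=> S0 Sp pS; have supS : has_sup S by split; [exists 0|exists p].
have sup_ge0 : 0 <= sup S by exact: sup_upper_bound.
apply/eqP; rewrite eq_le ge_sup //=; last by exists 0.
rewrite leNgt; apply/negP => supp.
have /(sup_upper_bound supS) : S ((sup S + p) / 2) by apply: pS; apply/andP; split; lra.
lra.
Qed.

Section Tclass_definitively.
Context {R : realType} {d : measure_display} {T : measurableType d}
  {P : probability T R} {Pn : forall n : nat, probability (n.-tuple T) R}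
  (hPn : is_product_family P Pn) {delta : R} {n : nat} (n_gt0 : (0 < n)%N)
  {A : set (n.-tuple T)} (mA : measurable A).

Let p := fine (Pn n A).
Let freq k (t : (n * k).-tuple T) : R := k%:R^-1 * \sum_(i < k) \1_A (block t i).

Let freq_le1 k t : freq k t <= 1.
Proof.
case: k t => [|k] t; first by rewrite /freq invr0 mul0r.
rewrite /freq ler_pdivrMl // mulr1 -[X in _ <= X%:R]card_ord -sumr_const.
by apply: ler_sum => i _; rewrite /indic; case: (_ \in _).
Qed.

Lemma measurable_Sfreq (I : interval R) (k : nat) :
  measurable (@Sfreq R T n A [set` I] k).
Proof.
have mfreq : measurable_fun setT (@freq k).
  by apply: measurable_funM; [exact: measurable_cst|exact: measurable_hits].
by rewrite -[X in measurable X]setTI; exact: mfreq measurableT _ (measurable_itv I).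
Qed.

Lemma definitively_in_Tclass0 :
  delta <= 1 -> definitively_in (Tclass Pn delta) A (0 : R).
Proof.
move=> delta_le1; exists 0%N => k _; split; first exact: measurable_Sfreq.
rewrite (_ : @Sfreq R T n A `[0, 1]%classic k = setT) ?probability_setT ?lee_fin //.
apply/seteqP; split=> t //= _; rewrite /Sfreq /= in_itv /=; apply/andP; split.
  by rewrite mulr_ge0 ?invr_ge0 // sumr_ge0 // => i _; rewrite /indic.
exact: freq_le1.
Qed.

Lemma definitively_in_Tclass_lt s : delta < 1 -> 0 <= s -> s < p ->
  definitively_in (Tclass Pn delta) A s.
Proof.
move=> delta_lt1 s0 sp.
have [k0 k0_big] := nat_gt_eventually (((1 - delta) * (p - s) ^+ 2)^-1).
exists k0 => k /k0_big k_big; split; first exact: measurable_Sfreq.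
set W := @Sfreq R T n A `]-oo, s[%classic k.
have mW : measurable W by exact: measurable_Sfreq.
have -> : @Sfreq R T n A `[s, 1]%classic k = ~` W.
  apply/seteqP; split=> t; rewrite /W /Sfreq /= !in_itv /=.
    by case/andP=> st _; rewrite ltNge st.
  by move/negP; rewrite -leNgt => ->; rewrite (freq_le1 k t).
rewrite probability_setC // -[X in (_ <= 1 - X)%E]fineK ?fin_num_measure //.
rewrite -EFinB lee_fin.
have ps_gt0 : 0 < p - s by rewrite subr_gt0.
have delta'_gt0 : 0 < 1 - delta by rewrite subr_gt0.
have := frequency_deviation_lt hPn n_gt0 mA mW ps_gt0 delta'_gt0 k_big.
suff /[swap]/[apply] : forall t, W t -> p - s <= `|freq k t - p| by rewrite -/W; lra.
move=> t; rewrite /W /Sfreq /= in_itv /= => fs.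
by rewrite /freq ler_normr; apply/orP; right; lra.
Qed.

Lemma definitively_in_Tclass_ub s : 0 < delta ->
  definitively_in (Tclass Pn delta) A s -> s <= p.
Proof.
move=> delta_gt0 [k0 k0_in]; rewrite leNgt; apply/negP => ps.
have [k1 k1_big] := nat_gt_eventually ((delta * (s - p) ^+ 2)^-1).
pose k := (maxn k0 k1).+1.
have [mW delta_le] := k0_in k (leq_maxl _ _).
have sp_gt0 : 0 < s - p by rewrite subr_gt0.
have := frequency_deviation_lt hPn n_gt0 mA mW sp_gt0 delta_gt0
  (k1_big k (leq_maxr _ _)).
suff /[swap]/[apply] :
    forall t, @Sfreq R T n A `[s, 1]%classic k t -> s - p <= `|freq k t - p|.
  by move: delta_le; rewrite -[Pn _ _]fineK ?fin_num_measure // lee_fin; lra.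
move=> t; rewrite /Sfreq /= in_itv /= => /andP [st _].
by rewrite /freq ler_normr; apply/orP; left; lra.
Qed.

End Tclass_definitively.

Theorem mainTheorem4 (R : realType) (d : measure_display) (T : measurableType d)
  (P : probability T R) (Pn : forall n : nat, probability (n.-tuple T) R)
  (hPn : is_product_family P Pn) (delta : R) (hdelta : 2^-1 < delta < 1) :
  forall (n : nat) (A : set (n.-tuple T)), (0 < n)%N -> measurable A ->
    (C_measure (Tclass Pn delta) A)%:E = Pn n A.
Proof.
move=> n A n_gt0 mA; have /andP [delta_gt_half delta_lt1] := hdelta.
have delta_gt0 : 0 < delta by apply: lt_trans delta_gt_half; rewrite invr_gt0.
have p_le1 : fine (Pn n A) <= 1.
  by rewrite -lee_fin fineK ?fin_num_measure ?probability_le1.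
rewrite -[Pn n A]fineK ?fin_num_measure //; congr (_%:E).
apply: sup_eq_ubound_itv.
- split; first by rewrite lexx ler01.
  by apply: definitively_in_Tclass0 => //; exact: ltW.
- by move=> s [_]; exact (definitively_in_Tclass_ub hPn n_gt0 mA s delta_gt0).
- move=> s /andP [s_ge0 s_lt_p]; split.
    by rewrite s_ge0 /=; apply: ltW; exact: lt_le_trans p_le1.
  exact: (definitively_in_Tclass_lt hPn n_gt0 mA s delta_lt1 s_ge0 s_lt_p).
Qed.
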